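(* Let $T$ be an $n$-vertex tree with domination number $\gamma$. (i) If $\gamma=1$, then $\xi^{ee}(T)=\xi^{ee}(S_n)=\frac{3n-3}{2}$. (ii) If $\gamma=2$, then $\xi^{ee}(T)\leqslant\frac{5n-4}{6}$, with equality if and only if $T\cong P_2(a,b)$ for some $a,b$ with $a+b+2=n$. (iii) If $\gamma\geqslant 3$, then $\xi^{ee}(T)\leqslant\frac{10n-3\gamma-7}{12}$, with equality if and only if $T\cong T_{n,\gamma}$.
   Context: For a vertex $x$ of a connected graph $G$, $\varepsilon_G(x)$ is its eccentricity and $d_G(x)$ its degree; $\xi^{ee}(G)=\sum_{uv\in E(G)}\left(\frac{1}{\varepsilon_G(u)}+\frac{1}{\varepsilon_G(v)}\right)=\sum_{x}\frac{d_G(x)}{\varepsilon_G(x)}$. The domination number is the minimum size of a set $D$ of vertices such that every vertex is in $D$ or adjacent to a vertex of $D$. $S_n$ is the star on $n$ vertices. $P_2(a,b)$ is the tree obtained from an edge $xy$ by attaching $a$ pendant vertices to $x$ and $b$ pendant vertices to $y$. For $m\geqslant 1$, $T_{n,m}$ is the tree obtained from the star $S_{n-m+1}$ by attaching one pendant edge to each of $m-1$ of its non-central vertices. *)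

From HB Require Import structures.
From mathcomp Require Import all_boot all_order all_algebra.
Set Implicit Arguments. Unset Strict Implicit. Unset Printing Implicit Defensive.
Import Order.TTheory GRing.Theory Num.Theory.
Local Open Scope ring_scope.

(* A simple graph is a symmetric irreflexive relation e on a finType T. *)
Section Graphs.
Variables (T : finType) (e : rel T).

Definition connected_graph : Prop := forall x y : T, connect e x y.

Definition acyclic_graph : Prop :=
  forall p : seq T, uniq p -> cycle e p -> (size p < 3)%N.

Definition is_tree : Prop := connected_graph /\ acyclic_graph.

Fixpoint ball (k : nat) (x : T) : {set T} :=
  match k with
  | 0 => [set x]
  | k'.+1 => ball k' x :|: [set y | [exists z in ball k' x, e z y]]
  end.

(* distance: least k with y in ball k x (values < #|T| for connected graphs) *)
Definition dist (x y : T) : nat :=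
  find (fun k => y \in ball k x) (iota 0 #|T|).

Definition ecc (x : T) : nat := \max_(y : T) dist x y.

Definition deg (x : T) : nat := #|[set y | e x y]|.

Definition xi_ee : rat := \sum_(x : T) (deg x)%:R / (ecc x)%:R.

Definition dominatingb (D : {set T}) : bool :=
  [forall x, (x \in D) || [exists y in D, e x y]].

(* domination number: minimum size of a dominating set (setT always dominates) *)
Definition domnum : nat :=
  \big[minn/#|T|]_(D : {set T} | dominatingb D) #|D|.

End Graphs.

Definition graph_iso (T T' : finType) (e : rel T) (e' : rel T') : Prop :=
  exists f : T -> T', bijective f /\ forall x y, e' (f x) (f y) = e x y.

Definition symrel (T : finType) (r : rel T) : rel T := fun x y => r x y || r y x.

(* Star S_n on 'I_n with center 0 *)
Definition star_rel (n : nat) : rel 'I_n :=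
  fun i j => (val i == 0)%N (+) (val j == 0)%N.

(* P_2(a,b) on 'I_(a+b+2): x = 0, y = 1, 2..a+1 pendant at x, a+2..a+b+1 pendant at y *)
Definition p2_adj (a b : nat) : rel 'I_(a + b + 2) := fun i j =>
  [|| (val i == 0)%N && (val j == 1)%N,
      (val i == 0)%N && (2 <= val j < a + 2)%N
    | (val i == 1)%N && (a + 2 <= val j)%N].
Definition p2_rel (a b : nat) : rel 'I_(a + b + 2) := symrel (@p2_adj a b).

(* T_{n,m} on 'I_n: center 0, star leaves 1..n-m, and vertex n-m+k
   (k = 1..m-1) pendant at leaf k *)
Definition tnm_adj (n m : nat) : rel 'I_n := fun i j =>
  ((val i == 0)%N && (1 <= val j <= n - m)%N) ||
  [&& (n - m + 1 <= val j)%N, (1 <= val i)%N & (val i == val j - (n - m))%N].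
Definition tnm_rel (n m : nat) : rel 'I_n := symrel (@tnm_adj n m).

Arguments star_rel n : clear implicits.
Arguments p2_rel a b : clear implicits.
Arguments tnm_rel n m : clear implicits.

From HB Require Import structures.
From mathcomp Require Import all_boot all_order all_algebra.
From mathcomp Require Import zify ring lra.
Set Implicit Arguments. Unset Strict Implicit. Unset Printing Implicit Defensive.
Import Order.TTheory GRing.Theory Num.Theory.

(* Root the tree at a vertex r of minimum eccentricity. If the radius is at least 3, every
   term d(x)/ecc(x) is at most d(x)/3 and the degree sum 2(n-1) gives xi <= 2(n-1)/3, below
   both bounds. A tree of radius 1 is the star, which is exactly the case gamma = 1. For
   radius 2 the vertices are r, its neighbours L1 and the vertices L2 at distance 2. Either a
   neighbour y0 of r also has eccentricity 2, which forces T = P_2(a,b) and xi = (5n-4)/6; or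
   every neighbour has eccentricity 3 and every vertex of L2 eccentricity 4, and then
   xi = (7(n-1) + 3|L1|)/12. In the latter case r together with the parents of L2 dominates,
   so |L1| + gamma <= n, with equality exactly when distinct vertices of L2 have distinct
   parents, i.e. when T = T_{n,gamma}. Both parity classes of levels dominate, so
   2 gamma <= n, which settles the remaining comparisons. *)

Section Balls.
Variables (T : finType) (e : rel T).

Lemma ballS k x : ball e k.+1 x = ball e k x :|: [set y | [exists z in ball e k x, e z y]].
Proof. by []. Qed.

Lemma in_ball0 x y : (y \in ball e 0 x) = (y == x).
Proof. by rewrite /= in_set1. Qed.

Lemma ball_subS k x : ball e k x \subset ball e k.+1 x.
Proof. by rewrite ballS subsetUl. Qed.

Lemma ball_sub k l x : (k <= l)%N -> ball e k x \subset ball e l x.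
Proof.
move=> kl; rewrite -(subnKC kl); elim: (l - k)%N => [|i IH]; first by rewrite addn0.
by apply: subset_trans IH _; rewrite addnS ball_subS.
Qed.

Lemma ball_center k x : x \in ball e k x.
Proof. by apply: (subsetP (ball_sub x (leq0n k))); rewrite in_ball0. Qed.

Lemma ball_edge k x z y : z \in ball e k x -> e z y -> y \in ball e k.+1 x.
Proof.
move=> zk ezy; rewrite ballS inE; apply/orP; right.
by rewrite inE; apply/existsP; exists z; rewrite zk.
Qed.

Lemma ballSP k x y : reflect (y \in ball e k x \/ exists2 z, z \in ball e k x & e z y)
  (y \in ball e k.+1 x).
Proof.
rewrite ballS !inE; apply: (iffP orP) => -[H|H]; [by left | | by left|].
  by right; case/existsP: H => z /andP[]; exists z.
by right; case: H => z zk ezy; apply/existsP; exists z; rewrite zk.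
Qed.

Lemma ball_trans i j x a b : a \in ball e i x -> b \in ball e j a -> b \in ball e (i + j) x.
Proof.
move=> ai; elim: j b => [|j IH] b; first by rewrite in_ball0 addn0 => /eqP->.
case/ballSP => [/IH H | [z /IH H ezb]]; last by rewrite addnS; apply: ball_edge H ezb.
by rewrite addnS; apply: (subsetP (ball_subS _ _)).
Qed.

Lemma path_last_ball x p : path e x p -> last x p \in ball e (size p) x.
Proof.
elim/last_ind: p => [|p z IH]; first by rewrite /= in_ball0.
rewrite rcons_path last_rcons size_rcons => /andP[/IH H ez].
exact: ball_edge H ez.
Qed.

Lemma connect_ball x y : connect e x y -> y \in ball e #|T|.-1 x.
Proof.
case/connectP => p ep ->.
case: (shortenP ep) => p' ep' up' _.
apply: (subsetP (ball_sub x _)) (path_last_ball ep').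
have: (size (x :: p') <= #|T|)%N by move/card_uniqP: up' => <-; rewrite max_card.
by rewrite /=; case: #|T| => // m; rewrite ltnS.
Qed.

Lemma ball1P x y : reflect (y = x \/ e x y) (y \in ball e 1 x).
Proof.
apply: (iffP (ballSP 0 x y)) => [[|[z]]|[->|exy]].
- by rewrite in_ball0 => /eqP; left.
- by rewrite in_ball0 => /eqP -> ; right.
- by left; apply: ball_center.
- by right; exists x => //; apply: ball_center.
Qed.

Lemma mem_ball1 x y : e x y -> y \in ball e 1 x.
Proof. by move=> exy; apply/ball1P; right. Qed.

Lemma ball2E x y : y \in ball e 2 x -> [\/ y = x, e x y | exists2 w, e x w & e w y].
Proof.
case/ballSP => [/ball1P [|]|[z /ball1P [->|exz] ezy]]; [by constructor 1|by constructor 2| |].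
  by constructor 2.
by constructor 3; exists z.
Qed.

Lemma mem_ball2 x w y : e x w -> e w y -> y \in ball e 2 x.
Proof. by move=> exw ewy; apply: (ball_edge (z := w)) => //; apply: mem_ball1. Qed.

Lemma ball_leafS z p : (forall w, e z w -> w = p) ->
  forall k w, w \in ball e k.+1 z -> w = z \/ w \in ball e k p.
Proof.
move=> Hz; elim=> [|k IH] w.
  case/ball1P => [->|/Hz ->]; [by left | by right; apply: ball_center].
case/ballSP => [/IH [->|H]|[u /IH [->|H] euw]]; [by left | | |].
- by right; apply: (subsetP (ball_subS _ _)).
- by right; rewrite (Hz _ euw); apply: ball_center.
- by right; apply: ball_edge H euw.
Qed.

Hypothesis conn : connected_graph e.

Lemma dist_leq x y k : (dist e x y <= k)%N = (y \in ball e k x).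
Proof.
have yin := connect_ball (conn x y).
have hasP : has (fun k => y \in ball e k x) (iota 0 #|T|).
  apply/hasP; exists #|T|.-1 => //; rewrite mem_iota /= add0n.
  by rewrite ltn_predL; apply/card_gt0P; exists x.
have Hlt : (dist e x y < #|T|)%N by rewrite /dist -{2}(size_iota 0 #|T|) -has_find.
have Hin : y \in ball e (dist e x y) x.
  by have := nth_find 0 hasP; rewrite nth_iota // add0n.
apply/idP/idP => [H|H]; first exact: (subsetP (ball_sub x H)).
rewrite leqNgt; apply/negP => Hk.
have := before_find 0 Hk; rewrite nth_iota ?add0n ?H //.
by apply: ltn_trans Hk Hlt.
Qed.

Lemma ecc_leq x k : (ecc e x <= k)%N = [forall y, y \in ball e k x].
Proof.
apply/idP/forallP => [H y|H].
  by rewrite -dist_leq; apply: leq_trans H; apply: leq_bigmax.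
by apply/bigmax_leqP => y _; rewrite dist_leq.
Qed.

Lemma ecc_gt x y k : y \notin ball e k x -> (k < ecc e x)%N.
Proof. by move=> H; rewrite ltnNge ecc_leq; apply/negP => /forallP /(_ y); apply/negP. Qed.

Lemma ecc_le x k : (forall y, y \in ball e k x) -> (ecc e x <= k)%N.
Proof. by move=> H; rewrite ecc_leq; apply/forallP. Qed.

End Balls.

Section Domination.
Variables (T : finType) (e : rel T).

Lemma domnum_le D : dominatingb e D -> (domnum e <= #|D|)%N.
Proof.
move=> HD; rewrite /domnum; have: D \in index_enum {set T} by rewrite mem_index_enum.
elim: (index_enum _) => // a s IH; rewrite in_cons big_cons.
case: (eqVneq D a) => [<- _|_ /= /IH H]; first by rewrite HD geq_minl.
by case: (dominatingb e a) => //; apply: leq_trans (geq_minr _ _) H.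
Qed.

Lemma domnum_attained : exists2 D, dominatingb e D & #|D| = domnum e.
Proof.
rewrite /domnum; apply: (big_ind (fun v => exists2 D, dominatingb e D & #|D| = v)).
- by exists setT; [apply/forallP => x; rewrite inE | rewrite cardsT].
- move=> a b [D1 H1 E1] [D2 H2 E2]; case: (leqP a b) => ab.
    by exists D1 => //; rewrite E1; apply/esym/minn_idPl.
  by exists D2 => //; rewrite E2; apply/esym/minn_idPr/ltnW.
- by move=> D HD; exists D.
Qed.

Lemma domnum_gt0 : (0 < #|T|)%N -> (0 < domnum e)%N.
Proof.
case/card_gt0P => x0 _; case: domnum_attained => D HD.
case: (domnum e) => // /eqP; rewrite cards_eq0 => /eqP DE.
by move/forallP: HD => /(_ x0); rewrite DE inE; case/existsP => y; rewrite inE.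
Qed.

Lemma dominating1 c : dominatingb e [set c] -> forall x, x = c \/ e x c.
Proof.
move/forallP => H x; case/orP: (H x); first by rewrite inE => /eqP; left.
by case/existsP => y; rewrite inE => /andP[/eqP-> ]; right.
Qed.

Lemma exists_non_nbr : symmetric e -> domnum e != 1%N -> (0 < #|T|)%N ->
  forall c, exists2 x, x != c & ~~ e c x.
Proof.
move=> esy H1 HT c.
case: (boolP [exists x, (x != c) && ~~ e c x]) => [/existsP[x /andP[]]|]; first by exists x.
rewrite negb_exists => /forallP Hall; exfalso.
have Hd : dominatingb e [set c].
  apply/forallP => x; rewrite inE; have := Hall x; rewrite negb_and negbK.
  case/orP => [->//|ecx]; apply/orP; right; apply/existsP; exists c.
  by rewrite inE eqxx esy -(negbK (e c x)) ecx.
have := domnum_le Hd; rewrite cards1 => Hle; have := domnum_gt0 HT.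
by move: H1; case: (domnum e) Hle => [|[]].
Qed.

End Domination.

Section RootedTree.
Variables (T : finType) (e : rel T).
Hypotheses (esy : symmetric e) (eirr : irreflexive e) (tree : is_tree e).

Let conn : connected_graph e := tree.1.
Let acyc : acyclic_graph e := tree.2.

Lemma edge_neq x y : e x y -> x != y.
Proof. by move=> exy; apply/eqP => Exy; rewrite Exy eirr in exy. Qed.

Lemma tree_nbrs_nonadj c u v : e c u -> e c v -> ~~ e u v.
Proof.
move=> ecu ecv; apply/negP => euv.
have := tree.2 [:: c; u; v]; rewrite /= !inE !negb_or (edge_neq ecu) (edge_neq ecv).
by rewrite (edge_neq euv) /cycle /= ecu euv esy ecv => /(_ isT isT).
Qed.

Local Notation avoid v := (fun a b => [&& e a b, a != v & b != v]).

Lemma symmetric_avoid v : symmetric (avoid v).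
Proof. by move=> a b; rewrite esy; case: (a != v); case: (b != v); rewrite ?andbF ?andbT. Qed.

(* Such a path would close a cycle through v. *)
Lemma nbrs_not_connect_avoid v u1 u2 : e v u1 -> e v u2 -> u1 != u2 ->
  ~ connect (avoid v) u1 u2.
Proof.
move=> ev1 ev2 n12 /connectP[p ep Hl].
case: (shortenP ep) Hl => p' ep' up' _ Hl'.
have pall : all (fun b => b != v) p'.
  elim: p' {up' Hl'} (u1) ep' => //= a q IH u /andP[/and3P[_ _ av] Hq].
  by rewrite av (IH a).
have pe : path e u1 p' by apply: sub_path ep' => a b /and3P[].
have: (size (v :: u1 :: p') < 3)%N.
  apply: acyc.
    rewrite cons_uniq up' andbT in_cons negb_or (edge_neq ev1) /=.
    by apply/negP => /(allP pall); rewrite eqxx.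
  by rewrite /cycle /= ev1 rcons_path pe /= -Hl' esy ev2.
case: p' {pall pe ep' up'} Hl' => [|a q] //= Hl'.
by move: n12; rewrite Hl' eqxx.
Qed.

Variable r : T.
Local Notation lev x := (dist e r x).

Lemma lev_le x k : (lev x <= k)%N = (x \in ball e k r).
Proof. exact: dist_leq. Qed.

Lemma lev_root : lev r = 0%N.
Proof. by apply/eqP; rewrite -leqn0 lev_le ball_center. Qed.

Lemma lev_eq0 x : lev x = 0%N -> x = r.
Proof. by move=> H; have := leqnn (lev x); rewrite {2}H lev_le in_ball0 => /eqP. Qed.

Lemma lev_edge x y : e x y -> (lev y <= (lev x).+1)%N.
Proof. by move=> exy; rewrite lev_le; apply: ball_edge exy; rewrite -lev_le. Qed.

Lemma exists_parent x k : lev x = k.+1 -> exists2 p, e p x & lev p = k.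
Proof.
move=> Hx.
have: x \in ball e k.+1 r by rewrite -lev_le Hx.
have: x \notin ball e k r by rewrite -lev_le Hx ltnn.
move=> nk /ballSP [H|[z zk ezx]]; first by rewrite H in nk.
exists z => //; apply/eqP; rewrite eqn_leq lev_le zk /=.
by have := lev_edge ezx; rewrite Hx ltnS.
Qed.

Lemma lev_lt_neq w x : (lev w < lev x)%N -> w != x.
Proof. by apply: contraTneq => ->; rewrite ltnn. Qed.

(* Follow parents down to the root: all of them lie strictly below the level of x. *)
Lemma connect_root_avoid x u : u != x -> (lev u <= lev x)%N -> connect (avoid x) u r.
Proof.
move Hk: (lev u) => k; elim: k u Hk => [|k IH] u Hk ux Hux.
  by rewrite (lev_eq0 Hk) connect0.
case: (exists_parent Hk) => p epu Hp.
have px : p != x by apply: lev_lt_neq; rewrite Hp.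
apply: (connect_trans (connect1 _)) (IH p Hp px (ltnW Hux)).
by rewrite esy epu ux.
Qed.

Lemma connect_avoid x u v : u != x -> v != x -> (lev u <= lev x)%N -> (lev v <= lev x)%N ->
  connect (avoid x) u v.
Proof.
move=> ux vx lux lvx; apply: connect_trans (connect_root_avoid ux lux) _.
by rewrite (sym_connect_sym (symmetric_avoid x)) connect_root_avoid.
Qed.

Lemma parent_uniq x p1 p2 : e p1 x -> e p2 x -> (lev p1 < lev x)%N -> (lev p2 < lev x)%N ->
  p1 = p2.
Proof.
move=> e1 e2 l1 l2; apply/eqP; apply/negP => /negP n12.
have c12 : connect (avoid x) p1 p2 by apply: connect_avoid; rewrite ?lev_lt_neq // ltnW.
by apply: (nbrs_not_connect_avoid _ _ n12 c12); rewrite esy.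
Qed.

Lemma edge_lev_neq x y : e x y -> lev x != lev y.
Proof.
move=> exy; apply/negP => /eqP Hxy.
case Hk: (lev x) Hxy => [|k] Hxy.
  by move: exy; rewrite (lev_eq0 Hk) (lev_eq0 (esym Hxy)) eirr.
case: (exists_parent Hk) => px epx Hpx.
have ypx : y != px by apply/eqP => E; move: Hpx; rewrite -E -Hxy; lia.
have cy : connect (avoid x) y px.
  apply: connect_avoid.
  - by rewrite eq_sym edge_neq.
  - by apply: lev_lt_neq; rewrite Hk Hpx.
  - by rewrite Hk Hxy.
  - by rewrite Hk Hpx.
by apply: (nbrs_not_connect_avoid exy _ ypx cy); rewrite esy.
Qed.

Lemma edge_lev x y : e x y -> lev y = (lev x).+1 \/ lev x = (lev y).+1.
Proof.
move=> exy; have h1 := lev_edge exy.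
have h2 : (lev x <= (lev y).+1)%N by apply: lev_edge; rewrite esy.
have := edge_lev_neq exy; move/eqP; lia.
Qed.

Lemma card_parents x : #|[set y | e x y & (lev y < lev x)%N]| = (x != r).
Proof.
case: (eqVneq x r) => [->|xr] /=.
  by apply/eqP; rewrite cards_eq0; apply/eqP/setP => y; rewrite !inE lev_root ltn0 andbF.
case Hk: (lev x) => [|k]; first by rewrite (lev_eq0 Hk) eqxx in xr.
case: (exists_parent Hk) => p epx Hp.
rewrite -(cards1 p); apply: eq_card => y; rewrite !inE.
apply/andP/eqP => [[eyx ly]|->]; last by rewrite esy epx Hp.
by apply: (parent_uniq (x := x)); rewrite ?Hk ?Hp // esy.
Qed.

Lemma exists_root_nbr : (1 < #|T|)%N -> exists y, e r y.
Proof.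
move=> HT.
have : (0 < #|[set~ r]|)%N by rewrite cardsC1; case: #|T| HT => [|[]].
case/card_gt0P => x; rewrite !inE => xr.
case/connectP: (conn r x) => [[|a p]] /=; first by move=> _ Ex; rewrite Ex eqxx in xr.
by case/andP => era _ _; exists a.
Qed.

Lemma lev_root_nbr y : e r y -> lev y = 1%N.
Proof.
move=> ery; have := lev_edge ery; rewrite lev_root.
case Hy: (lev y) => [|[]] // _.
by rewrite (lev_eq0 Hy) eirr in ery.
Qed.

Lemma lev_eq1 y : (lev y == 1%N) = e r y.
Proof.
apply/eqP/idP => [H|]; last exact: lev_root_nbr.
by case: (exists_parent H) => p epy /lev_eq0 pr; rewrite -pr.
Qed.

(* Each parity class of levels dominates the tree. *)
Lemma domnum_half : (1 < #|T|)%N -> (2 * domnum e <= #|T|)%N.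
Proof.
move=> HT; set A := [set x | odd (lev x)].
have dA : dominatingb e A.
  apply/forallP => x; rewrite inE; case Ox: (odd (lev x)) => //=.
  case: (eqVneq x r) => [->|xr].
    case: (exists_root_nbr HT) => y ery; apply/existsP; exists y.
    by rewrite inE ery andbT lev_root_nbr.
  case Hk: (lev x) Ox => [|k] Ox; first by rewrite (lev_eq0 Hk) eqxx in xr.
  case: (exists_parent Hk) => p epx Hp; apply/existsP; exists p.
  by rewrite inE esy epx Hp andbT; move: Ox => /=; case: (odd k).
have dB : dominatingb e (~: A).
  apply/forallP => x; rewrite !inE; case Ox: (odd (lev x)) => //=.
  case Hk: (lev x) Ox => [|k] Ox //.
  case: (exists_parent Hk) => p epx Hp; apply/existsP; exists p.
  by rewrite !inE esy epx Hp andbT; move: Ox => /=; case: (odd k).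
have := domnum_le dA; have := domnum_le dB; rewrite cardsCs setCK; lia.
Qed.

Local Open Scope ring_scope.

(* Count every edge once at each endpoint: at the child through h, at the parent through f. *)
Lemma sum_deg_parent (f h : T -> rat) :
  (forall x y, e x y -> (lev x < lev y)%N -> f x = h y) ->
  \sum_x (deg e x)%:R * f x = \sum_(x | x != r) (f x + h x).
Proof.
move=> Hfh.
have Edeg x : (deg e x)%:R * f x = \sum_(y | e x y && (lev y < lev x)%N) f x
           + \sum_(y | e x y && (lev x < lev y)%N) f x.
  rewrite mulrC mulr_natr /deg -sumr_const (bigID (fun y => lev y < lev x)%N) /=.
  congr (_ + _); apply: eq_bigl => y; rewrite inE //.
  case exy: (e x y) => //=; case: (edge_lev exy) => ->; lia.
under eq_bigr => x _ do rewrite Edeg.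
rewrite big_split [in RHS]big_split /=; congr (_ + _).
  rewrite [in RHS]big_mkcond /=; apply: eq_bigr => x _.
  rewrite (eq_bigl (fun y => y \in [set y | e x y & (lev y < lev x)%N])); last first.
    by move=> y; rewrite inE.
  by rewrite sumr_const card_parents; case: (x != r).
rewrite (exchange_big_dep predT) //= [in RHS]big_mkcond /=; apply: eq_bigr => y _.
rewrite (eq_bigl (fun x => x \in [set x | e y x & (lev x < lev y)%N])); last first.
  by move=> x; rewrite inE esy.
rewrite (eq_bigr (fun _ => h y)); last by move=> x; rewrite inE esy => /andP[]; apply: Hfh.
by rewrite sumr_const card_parents; case: (y != r).
Qed.

End RootedTree.

Lemma exists_neq2 (T : finType) (x c : T) : (3 <= #|T|)%N -> exists y, (y != x) && (y != c).
Proof.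
move=> HT; have : (0 < #|~: [set x; c]|)%N.
  by rewrite cardsCs setCK cards2; case: (x != c) => /=; rewrite subn_gt0 //; apply: leq_trans HT.
by case/card_gt0P => y; rewrite !inE negb_or => H; exists y.
Qed.

Lemma card_neq2 (T : finType) (a b : T) : a != b ->
  #|[pred x | (x != a) && (x != b)]| = (#|T| - 2)%N.
Proof.
move=> ab; have E2 : #|[set a; b]| = 2%N by rewrite cards2 ab.
have E3 : #|~: [set a; b]| = #|[pred x | (x != a) && (x != b)]|.
  by apply: eq_card => x; rewrite !inE negb_or.
have := cardsC [set a; b]; rewrite E2 E3; lia.
Qed.

Definition index_in (T : finType) (A : {set T}) x := index x (enum A).

Lemma index_in_lt (T : finType) (A : {set T}) x : x \in A -> (index_in A x < #|A|)%N.
Proof. by rewrite cardE /index_in index_mem mem_enum. Qed.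

Lemma index_in_inj (T : finType) (A : {set T}) x y : x \in A -> y \in A ->
  index_in A x = index_in A y -> x = y.
Proof. by move=> xA yA /(congr1 (nth x (enum A))); rewrite !nth_index ?mem_enum. Qed.

Lemma graph_iso_ord (T : finType) (e : rel T) n (e' : rel 'I_n) (R : nat -> nat -> bool)
    (f : T -> nat) :
  (forall x, (f x < n)%N) -> #|T| = n -> injective f ->
  (forall i j : 'I_n, e' i j = R i j) -> (forall x y, R (f x) (f y) = e x y) ->
  graph_iso e e'.
Proof.
move=> Hf HT inj He' HR; exists (fun x => Ordinal (Hf x)); split.
  apply: inj_card_bij; last by rewrite card_ord HT.
  by move=> x y /(congr1 val) /= /inj.
by move=> x y; rewrite He' /= HR.
Qed.

Section RadiusTwo.
Variables (T : finType) (e : rel T).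
Hypotheses (esy : symmetric e) (eirr : irreflexive e) (tree : is_tree e).
Hypothesis (HT : (3 <= #|T|)%N).
Hypothesis (no_univ : forall c, exists2 x, x != c & ~~ e c x).
Variable r : T.
Hypothesis hr : forall x, x \in ball e 2 r.

Let conn : connected_graph e := tree.1.
Local Notation lev := (dist e r).

Lemma lev_le2 x : (lev x <= 2)%N.
Proof. by rewrite (dist_leq conn). Qed.

Lemma ecc_gt1 x : (1 < ecc e x)%N.
Proof.
case: (no_univ x) => y yx nxy; apply: (ecc_gt conn (y := y)).
by apply/ball1P => -[/eqP|]; [rewrite (negbTE yx) | apply/negP].
Qed.

Lemma lev_cases x : [\/ x = r, e r x | lev x = 2%N].
Proof.
have := lev_le2 x; case Hx: (lev x) => [|[|[|]]] // _.
- by constructor 1; apply: (lev_eq0 tree).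
- by constructor 2; rewrite -(lev_eq1 eirr tree) Hx.
- by constructor 3.
Qed.

Lemma lev2_neq_root z : lev z = 2%N -> z != r.
Proof. by move=> Hz; apply/eqP => E; move: Hz; rewrite E (lev_root tree). Qed.

Lemma lev2_nbr z w : lev z = 2%N -> e z w -> e r w.
Proof.
move=> Hz ezw; rewrite -(lev_eq1 eirr tree); case: (edge_lev esy eirr tree r ezw); rewrite Hz.
  by move=> H; have := lev_le2 w; rewrite H.
by case=> ->.
Qed.

Lemma lev2_nbr_uniq z w1 w2 : lev z = 2%N -> e z w1 -> e z w2 -> w1 = w2.
Proof.
move=> Hz e1 e2; apply: (parent_uniq esy eirr tree (r := r) (x := z)).
- by rewrite esy.
- by rewrite esy.
- by rewrite Hz (lev_root_nbr eirr tree (lev2_nbr Hz e1)).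
- by rewrite Hz (lev_root_nbr eirr tree (lev2_nbr Hz e2)).
Qed.

Lemma lev1_nbr y w : e r y -> e y w -> w = r \/ lev w = 2%N.
Proof.
move=> ery eyw; case: (lev_cases w) => [->|erw|]; [by left| |by right].
have := edge_lev_neq esy eirr tree r eyw.
by rewrite (lev_root_nbr eirr tree ery) (lev_root_nbr eirr tree erw).
Qed.

Lemma exists_lev2 : exists z, lev z = 2%N.
Proof.
case: (no_univ r) => z zr nrz; exists z.
by case: (lev_cases z) => // [/eqP|]; [rewrite (negbTE zr) | move=> H; rewrite H in nrz].
Qed.

Lemma lev2_not_root_nbr z : lev z = 2%N -> ~~ e r z.
Proof. by move=> Hz; rewrite -(lev_eq1 eirr tree) Hz. Qed.

Lemma lev2_nonadj z w : lev z = 2%N -> lev w = 2%N -> ~~ e z w.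
Proof. by move=> Hz Hw; apply/negP => /(edge_lev_neq esy eirr tree r); rewrite Hz Hw. Qed.

Definition L1 := [set y | e r y].
Definition L2 := [set z | lev z == 2%N].

Lemma card_levels : #|T| = (1 + #|L1| + #|L2|)%N.
Proof.
suff H : #|[set~ r]| = (#|L1| + #|L2|)%N.
  rewrite cardsC1 in H; rewrite -addnA -H.
  have : (0 < #|T|)%N by apply/card_gt0P; exists r.
  by case: #|T|.
have -> : [set~ r] = L1 :|: L2.
  apply/setP => x; rewrite !inE; case: (lev_cases x) => [->|erx|Hx].
  - by rewrite eqxx /= (lev_root tree) eirr.
  - by rewrite erx /=; apply/eqP => E; rewrite E eirr in erx.
  - by rewrite Hx eqxx orbT lev2_neq_root.
rewrite cardsU; have -> : L1 :&: L2 = set0.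
  apply/setP => x; rewrite !inE; apply/negP => /andP[erx /eqP Hx].
  by rewrite (negbTE (lev2_not_root_nbr Hx)) in erx.
by rewrite cards0 subn0.
Qed.

Local Open Scope ring_scope.

Section Bicentral.
Variable y0 : T.
Hypotheses (ery0 : e r y0) (hy0 : forall x, x \in ball e 2 y0).

Lemma y0r : y0 != r.
Proof. by rewrite eq_sym (edge_neq eirr ery0). Qed.

Lemma y0_adj_lev2 z : lev z = 2%N -> e y0 z.
Proof.
move=> Hz; case: (ball2E (hy0 z)) => [E|//|[w ew ewz]].
  by move: Hz; rewrite E (lev_root_nbr eirr tree ery0).
case: (lev1_nbr ery0 ew) => [Ew|Hw].
  by rewrite Ew (negbTE (lev2_not_root_nbr Hz)) in ewz.
by rewrite (negbTE (lev2_nonadj Hw Hz)) in ewz.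
Qed.

Lemma root_nbr_leaf y w : e r y -> y != y0 -> e y w -> w = r.
Proof.
move=> ery yy0 eyw; case: (lev1_nbr ery eyw) => // Hw.
have E : y = y0 := lev2_nbr_uniq Hw (etrans (esy w y) eyw) (etrans (esy w y0) (y0_adj_lev2 Hw)).
by rewrite E eqxx in yy0.
Qed.

Lemma bicentral_cases x : [\/ x = r, x = y0, (e r x /\ x != y0) | lev x = 2%N].
Proof.
case: (lev_cases x) => [->|erx|]; [by constructor 1| |by constructor 4].
by case: (eqVneq x y0) => [->|xy]; [constructor 2 | constructor 3].
Qed.

Lemma ecc_bicentral x : (ecc e x = if (x == r) || (x == y0) then 2 else 3)%N.
Proof.
apply/eqP; rewrite eqn_leq; case: (bicentral_cases x) => [->|->|[erx xy]|Hx].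
- by rewrite eqxx /= ecc_gt1 (ecc_le conn hr).
- by rewrite eqxx orbT ecc_gt1 (ecc_le conn hy0).
- rewrite (negbTE xy) orbF; have xr : x != r by apply/eqP => E; rewrite E eirr in erx.
  rewrite (negbTE xr) /=; apply/andP; split.
    apply: (ecc_le conn) => w; apply: (ball_trans (i := 1)) (hr w).
    by apply: mem_ball1; rewrite esy.
  case: exists_lev2 => z Hz; apply: (ecc_gt conn (y := z)); apply/negP.
  case/ball2E => [E|exz|[w exw ewz]].
  + by move: Hz; rewrite E (lev_root_nbr eirr tree erx).
  + by move: (root_nbr_leaf erx xy exz) Hz => ->; rewrite (lev_root tree).
  + by move: (root_nbr_leaf erx xy exw) => E; rewrite E (negbTE (lev2_not_root_nbr Hz)) in ewz.
- have xr := lev2_neq_root Hx.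
  have xy : x != y0 by apply/eqP => E; move: Hx; rewrite E (lev_root_nbr eirr tree ery0).
  rewrite (negbTE xr) (negbTE xy) /=; apply/andP; split.
    apply: (ecc_le conn) => w; apply: (ball_trans (i := 1)) (hy0 w).
    by apply: mem_ball1; rewrite esy y0_adj_lev2.
  case: (no_univ y0) => y yy0 ny.
  have ery : e r y.
    case: (lev_cases y) => [E|//|Hy]; first by rewrite E esy ery0 in ny.
    by rewrite y0_adj_lev2 in ny.
  apply: (ecc_gt conn (y := y)); apply/negP.
  case/ball2E => [E|exy|[w exw ewy]].
  + by move: Hx; rewrite -E (lev_root_nbr eirr tree ery).
  + have E := lev2_nbr_uniq Hx exy (etrans (esy x y0) (y0_adj_lev2 Hx)).
    by rewrite E eqxx in yy0.
  + have E := lev2_nbr_uniq Hx exw (etrans (esy x y0) (y0_adj_lev2 Hx)).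
    by rewrite E (negbTE (tree_nbrs_nonadj esy eirr tree ery0 ery)) in ewy.
Qed.

Lemma xi_ee_bicentral : xi_ee e = ((5 * #|T|)%:R - 4) / 6.
Proof.
rewrite /xi_ee.
have -> := sum_deg_parent esy eirr tree (r := r) (f := fun x => ((ecc e x)%:R)^-1)
              (h := fun _ => 2^-1).
  rewrite (bigD1 y0) /=; last exact: y0r.
  rewrite ecc_bicentral eqxx orbT.
  rewrite (eq_bigr (fun _ => 3^-1 + 2^-1)); last first.
    by move=> x /andP[xr xy]; rewrite ecc_bicentral (negbTE xr) (negbTE xy).
  rewrite sumr_const card_neq2; last by rewrite eq_sym y0r.
  case: #|T| HT => [|[|[|m]]] // _.
  have -> : (m.+3 - 2)%N = m.+1 by [].
  rewrite -mulr_natr natrM -[m.+3]addn3 -[m.+1]addn1 !natrD.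
  by field.
move=> x y exy lxy; rewrite ecc_bicentral.
case: (bicentral_cases x) => [->|->|[erx xy]|Hx]; rewrite ?eqxx ?orbT //.
- have Hy : lev y = 2%N.
    by have := lev_le2 y; move: lxy; rewrite (lev_root_nbr eirr tree erx); lia.
  have E : x = y0 := lev2_nbr_uniq Hy (etrans (esy y x) exy) (etrans (esy y y0) (y0_adj_lev2 Hy)).
  by rewrite E eqxx in xy.
- by have := lev_le2 y; move: lxy; rewrite Hx; lia.
Qed.

Lemma domnum_bicentral : (domnum e <= 2)%N.
Proof.
apply: leq_trans (domnum_le (D := [set r; y0]) _) _; last by rewrite cards2; case: (r != y0).
apply/forallP => x; case: (bicentral_cases x) => [->|->|[erx _]|Hx]; rewrite !inE ?eqxx ?orbT //=.
- by apply/orP; right; apply/existsP; exists r; rewrite !inE eqxx esy erx.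
- by apply/orP; right; apply/existsP; exists y0; rewrite !inE eqxx orbT esy y0_adj_lev2.
Qed.

Definition L1r := L1 :\ y0.

(* The numbering of p2_rel: r is x = 0, y0 is y = 1, then the other neighbours of r, then L2. *)
Definition p2_label x : nat :=
  if x == r then 0%N else if x == y0 then 1%N else
  if e r x then (2 + index_in L1r x)%N else (2 + #|L1r| + index_in L2 x)%N.

Lemma p2_label_root : p2_label r = 0%N.
Proof. by rewrite /p2_label eqxx. Qed.

Lemma p2_label_y0 : p2_label y0 = 1%N.
Proof. by rewrite /p2_label eqxx (negbTE y0r). Qed.

Lemma p2_label_L1 x : e r x -> x != y0 ->
  p2_label x = (2 + index_in L1r x)%N /\ (index_in L1r x < #|L1r|)%N.
Proof.
move=> erx xy; have xr : x != r by rewrite eq_sym (edge_neq eirr erx).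
rewrite /p2_label (negbTE xr) (negbTE xy) erx; split => //.
by apply: index_in_lt; rewrite /L1r /L1 !inE xy erx.
Qed.

Lemma p2_label_L2 x : lev x = 2%N ->
  p2_label x = (2 + #|L1r| + index_in L2 x)%N /\ (index_in L2 x < #|L2|)%N.
Proof.
move=> Hx; have xr := lev2_neq_root Hx.
have xy : x != y0 by apply/eqP => E; move: Hx; rewrite E (lev_root_nbr eirr tree ery0).
rewrite /p2_label (negbTE xr) (negbTE xy) (negbTE (lev2_not_root_nbr Hx)); split => //.
by apply: index_in_lt; rewrite /L2 inE Hx.
Qed.

Definition p2_adjn (a i j : nat) : bool :=
  [|| (i == 0) && (j == 1), (i == 0) && (2 <= j < a + 2) | (i == 1) && (a + 2 <= j)]%N.
Definition p2_reln a i j := p2_adjn a i j || p2_adjn a j i.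

Lemma p2_label_inj : injective p2_label.
Proof.
move=> x y; case: (bicentral_cases x) => [->|->|[erx xy]|Hx];
  case: (bicentral_cases y) => [->|->|[ery yy]|Hy] //;
  rewrite ?p2_label_root ?p2_label_y0;
  try (case: (p2_label_L1 erx xy) => -> Bx); try (case: (p2_label_L1 ery yy) => -> By);
  try (case: (p2_label_L2 Hx) => -> Bx); try (case: (p2_label_L2 Hy) => -> By); try lia.
- move=> E; have E' : index_in L1r x = index_in L1r y by lia.
  by apply: (index_in_inj (A := L1r)) E'; rewrite /L1r /L1 ?inE ?xy ?yy ?erx ?ery.
- move=> E; have E' : index_in L2 x = index_in L2 y by lia.
  by apply: (index_in_inj (A := L2)) E'; rewrite /L2 ?inE ?Hx ?Hy.
Qed.

Lemma p2_label_adj x y : p2_reln #|L1r| (p2_label x) (p2_label y) = e x y.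
Proof.
have L12 u v : e r u -> u != y0 -> lev v = 2%N -> ~~ e u v.
  move=> eru uy Hv; apply/negP => euv.
  have E : u = y0 := lev2_nbr_uniq Hv (etrans (esy v u) euv) (etrans (esy v y0) (y0_adj_lev2 Hv)).
  by rewrite E eqxx in uy.
case: (bicentral_cases x) => [->|->|[erx xy]|Hx];
  case: (bicentral_cases y) => [->|->|[ery yy]|Hy];
  rewrite ?p2_label_root ?p2_label_y0;
  try (case: (p2_label_L1 erx xy) => -> Bx); try (case: (p2_label_L1 ery yy) => -> By);
  try (case: (p2_label_L2 Hx) => -> Bx); try (case: (p2_label_L2 Hy) => -> By);
  rewrite /p2_reln /p2_adjn.
- rewrite eirr; lia.
- rewrite ery0; lia.
- rewrite ery; lia.
- rewrite (negbTE (lev2_not_root_nbr Hy)); lia.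
- rewrite esy ery0; lia.
- rewrite eirr; lia.
- rewrite (negbTE (tree_nbrs_nonadj esy eirr tree ery0 ery)); lia.
- rewrite y0_adj_lev2 //; lia.
- rewrite esy erx; lia.
- rewrite (negbTE (tree_nbrs_nonadj esy eirr tree erx ery0)); lia.
- rewrite (negbTE (tree_nbrs_nonadj esy eirr tree erx ery)); lia.
- rewrite (negbTE (L12 _ _ erx xy Hy)); lia.
- rewrite esy (negbTE (lev2_not_root_nbr Hx)); lia.
- rewrite esy y0_adj_lev2 //; lia.
- rewrite esy (negbTE (L12 _ _ ery yy Hx)); lia.
- rewrite (negbTE (lev2_nonadj Hx Hy)); lia.
Qed.

Lemma bicentral_iso : (#|L1r| + #|L2| + 2)%N = #|T| /\ graph_iso e (p2_rel #|L1r| #|L2|).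
Proof.
have Hc : (#|L1r| + #|L2| + 2)%N = #|T|.
  rewrite card_levels (cardsD1 y0 L1) /L1r /L1 inE ery0 /=; lia.
split => //.
apply: (graph_iso_ord (R := p2_reln #|L1r|) (f := p2_label)) => //.
- move=> x; case: (bicentral_cases x) => [->|->|[erx xy]|Hx];
    rewrite ?p2_label_root ?p2_label_y0; try lia.
    by case: (p2_label_L1 erx xy) => -> ?; lia.
  by case: (p2_label_L2 Hx) => -> ?; lia.
- exact: p2_label_inj.
- exact: p2_label_adj.
Qed.

End Bicentral.

(* The default r is never used: a vertex at level 2 has a neighbour. *)
Definition parent2 z := odflt r [pick p | e z p].

Lemma parent2_spec z : lev z = 2%N -> e z (parent2 z) /\ e r (parent2 z).
Proof.
move=> Hz; rewrite /parent2; case: pickP => [p ezp|H] /=.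
  by split => //; apply: lev2_nbr Hz ezp.
case: (exists_parent tree Hz) => p epz _; by move: (H p); rewrite esy epz.
Qed.

Lemma parent2_uniq z p : lev z = 2%N -> e z p -> p = parent2 z.
Proof. by move=> Hz ezp; apply: lev2_nbr_uniq Hz ezp (parent2_spec Hz).1. Qed.

Lemma central_weights_sum (N : rat) (a b : nat) : N = 1 + a%:R + b%:R ->
  (3^-1 + 2^-1) *+ a + (4^-1 + 3^-1) *+ b = (7 * (N - 1) + 3 * a%:R) / 12 :> rat.
Proof. by move=> ->; rewrite -[_ *+ a]mulr_natr -[_ *+ b]mulr_natr; field. Qed.

Section Central.
Hypothesis hB : forall y, e r y -> exists x, x \notin ball e 2 y.

Lemma ecc_central x : ecc e x = if x == r then 2%N else if e r x then 3%N else 4%N.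
Proof.
apply/eqP; rewrite eqn_leq; case: (lev_cases x) => [->|erx|Hx].
- by rewrite eqxx /= ecc_gt1 (ecc_le conn hr).
- have xr : x != r by rewrite eq_sym (edge_neq eirr erx).
  rewrite (negbTE xr) erx; apply/andP; split.
    apply: (ecc_le conn) => w; apply: (ball_trans (i := 1)) (hr w).
    by apply: mem_ball1; rewrite esy.
  by case: (hB erx) => w Hw; apply: (ecc_gt conn Hw).
- rewrite (negbTE (lev2_neq_root Hx)) (negbTE (lev2_not_root_nbr Hx)).
  case: (parent2_spec Hx) => exp erp; apply/andP; split.
    apply: (ecc_le conn) => w; apply: (ball_trans (i := 2)) (hr w).
    by apply: (mem_ball2 (w := parent2 x)) => //; rewrite esy.
  case: (hB erp) => w Hw; apply: (ecc_gt conn (y := w)); apply/negP => Hw3.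
  case: (ball_leafS (fun w' => parent2_uniq (p := w') Hx) Hw3) => [E|]; last by apply/negP.
  by move: Hw; rewrite E (subsetP (ball_subS _ _ _)) // mem_ball1 // esy.
Qed.

Lemma card_root_nbrs : #|[pred x | (x != r) && e r x]| = #|L1|.
Proof.
apply: eq_card => x; rewrite /L1 !inE.
by case erx: (e r x); rewrite ?andbT ?andbF // eq_sym (edge_neq eirr erx).
Qed.

Lemma card_root_non_nbrs : #|[pred x | (x != r) && ~~ e r x]| = #|L2|.
Proof.
apply: eq_card => x; rewrite /L2 !inE.
case: (lev_cases x) => [->|erx|Hx].
- by rewrite eqxx (lev_root tree).
- by rewrite erx andbF (lev_root_nbr eirr tree erx).
- by rewrite Hx eqxx lev2_neq_root // lev2_not_root_nbr.
Qed.

Lemma xi_ee_central : xi_ee e = (7 * (#|T|%:R - 1) + 3 * (#|L1|)%:R) / 12.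
Proof.
pose g (k : nat) : rat := if k is 0%N then 2^-1 else if k is 1%N then 3^-1 else 4^-1.
have Hf x : ((ecc e x)%:R)^-1 = g (lev x).
  rewrite ecc_central; case: (lev_cases x) => [->|erx|Hx].
  - by rewrite eqxx (lev_root tree).
  - by rewrite (lev_root_nbr eirr tree erx) erx; case: eqP => // E; rewrite E eirr in erx.
  - by rewrite Hx (negbTE (lev2_neq_root Hx)) (negbTE (lev2_not_root_nbr Hx)).
rewrite /xi_ee.
have -> := (sum_deg_parent esy eirr tree (r := r) (f := fun x => ((ecc e x)%:R)^-1)
            (h := fun y => g (lev y).-1)).
  rewrite (bigID (fun x => e r x)) /=.
  rewrite (eq_bigr (fun _ => 3^-1 + 2^-1)); last first.
    by move=> x /andP[_ erx]; rewrite Hf (lev_root_nbr eirr tree erx).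
  rewrite [X in _ + X](eq_bigr (fun _ => 4^-1 + 3^-1)); last first.
    move=> x /andP[xr nrx]; rewrite Hf.
    case: (lev_cases x) => [E|erx|->] //; first by rewrite E eqxx in xr.
    by rewrite erx in nrx.
  rewrite !sumr_const card_root_nbrs card_root_non_nbrs.
  by apply: central_weights_sum; rewrite [in LHS]card_levels !natrD.
move=> x y exy lxy; rewrite Hf.
case: (edge_lev esy eirr tree r exy) => [->|H] //; by rewrite H ltnNge leqnSn in lxy.
Qed.

Lemma card_L1_le : (#|L1| <= #|T| - 2)%N.
Proof.
case: exists_lev2 => z Hz; have : (0 < #|L2|)%N by apply/card_gt0P; exists z; rewrite inE Hz.
by rewrite card_levels; lia.
Qed.

End Central.

Definition Par2 := parent2 @: L2.

Lemma Par2_root_nbr y : y \in Par2 -> e r y.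
Proof. by case/imsetP => z; rewrite /L2 inE => /eqP Hz ->; case: (parent2_spec Hz). Qed.

Lemma Par2_sub : Par2 \subset L1.
Proof. by apply/subsetP => y /Par2_root_nbr; rewrite /L1 inE. Qed.

Lemma card_Par2_le : (#|Par2| <= #|L2|)%N.
Proof. exact: leq_imset_card. Qed.

Lemma domnum_le_Par2 : (domnum e <= 1 + #|Par2|)%N.
Proof.
apply: leq_trans (domnum_le (D := r |: Par2) _) _; last by rewrite cardsU1; case: (r \notin Par2).
apply/forallP => x; rewrite !inE; case: (lev_cases x) => [->|erx|Hx]; rewrite ?eqxx //=.
- by apply/orP; right; apply/existsP; exists r; rewrite !inE eqxx esy erx.
- apply/orP; right; apply/existsP; exists (parent2 x); rewrite !inE (parent2_spec Hx).1 andbT.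
  by apply/orP; right; apply/imsetP; exists x => //; rewrite /L2 inE Hx.
Qed.

Lemma card_L1_domnum_le : (#|L1| + domnum e <= #|T|)%N.
Proof. have := domnum_le_Par2; have := card_Par2_le; rewrite card_levels; lia. Qed.

Section CentralExtremal.
Hypothesis heq : (#|L1| + domnum e)%N = #|T|.

Lemma card_Par2 : #|Par2| = #|L2|.
Proof. have := domnum_le_Par2; have := card_Par2_le; move: heq; rewrite card_levels; lia. Qed.

Lemma domnum_eq : domnum e = (#|L2| + 1)%N.
Proof. move: heq; rewrite card_levels; lia. Qed.

Lemma parent2_inj : {in L2 &, injective parent2}.
Proof. by apply/imset_injP; rewrite -/Par2 card_Par2. Qed.

Definition L1leaf := L1 :\: Par2.

Lemma card_L1leaf : #|L1leaf| = (#|L1| - #|L2|)%N.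
Proof. by rewrite /L1leaf cardsD (setIidPr Par2_sub) card_Par2. Qed.

Lemma card_L2_le : (#|L2| <= #|L1|)%N.
Proof. by rewrite -card_Par2 subset_leq_card // Par2_sub. Qed.

(* The numbering of tnm_rel: r is 0, the parents of L2 come first among the leaves of the star,
   and a vertex of L2 sits at #|L1| + (label of its parent). *)
Definition tnm_label x : nat :=
  if x == r then 0%N else if x \in Par2 then (1 + index_in Par2 x)%N else
  if e r x then (1 + #|L2| + index_in L1leaf x)%N else (1 + #|L1| + index_in Par2 (parent2 x))%N.

Lemma central_cases x : [\/ x = r, x \in Par2, (e r x /\ x \notin Par2) | lev x = 2%N].
Proof.
case: (lev_cases x) => [->|erx|]; [by constructor 1| |by constructor 4].
by case: (boolP (x \in Par2)) => xP; [constructor 2 | constructor 3].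
Qed.

Lemma tnm_label_root : tnm_label r = 0%N.
Proof. by rewrite /tnm_label eqxx. Qed.

Lemma tnm_label_Par2 x : x \in Par2 ->
  tnm_label x = (1 + index_in Par2 x)%N /\ (index_in Par2 x < #|L2|)%N.
Proof.
move=> xP; have xr : x != r by rewrite eq_sym (edge_neq eirr (Par2_root_nbr xP)).
by rewrite /tnm_label (negbTE xr) xP -card_Par2 index_in_lt.
Qed.

Lemma tnm_label_L1leaf x : e r x -> x \notin Par2 ->
  tnm_label x = (1 + #|L2| + index_in L1leaf x)%N /\ (index_in L1leaf x < #|L1| - #|L2|)%N.
Proof.
move=> erx xP; have xr : x != r by rewrite eq_sym (edge_neq eirr erx).
rewrite /tnm_label (negbTE xr) (negbTE xP) erx -card_L1leaf; split => //.
by apply: index_in_lt; rewrite /L1leaf /L1 !inE xP erx.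
Qed.

Lemma parent2_Par2 x : lev x = 2%N -> parent2 x \in Par2.
Proof. by move=> Hx; apply/imsetP; exists x => //; rewrite /L2 inE Hx. Qed.

Lemma tnm_label_L2 x : lev x = 2%N ->
  tnm_label x = (1 + #|L1| + index_in Par2 (parent2 x))%N /\ (index_in Par2 (parent2 x) < #|L2|)%N.
Proof.
move=> Hx; have xr := lev2_neq_root Hx.
have xP : x \notin Par2 by apply/negP => /Par2_root_nbr; rewrite (negbTE (lev2_not_root_nbr Hx)).
rewrite /tnm_label (negbTE xr) (negbTE xP) (negbTE (lev2_not_root_nbr Hx)); split => //.
by rewrite -card_Par2 index_in_lt // parent2_Par2.
Qed.

Definition tnm_adjn (n m a b : nat) : bool :=
  (((a == 0) && (1 <= b <= n - m)) || [&& n - m + 1 <= b, 1 <= a & a == b - (n - m)])%N.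
Definition tnm_reln n m a b := tnm_adjn n m a b || tnm_adjn n m b a.

Lemma tnm_label_inj : injective tnm_label.
Proof.
have Hk := card_L2_le.
move=> x y; case: (central_cases x) => [->|xP|[erx xP]|Hx];
  case: (central_cases y) => [->|yP|[ery yP]|Hy] //;
  rewrite ?tnm_label_root;
  try (case: (tnm_label_Par2 xP) => -> Bx); try (case: (tnm_label_Par2 yP) => -> By);
  try (case: (tnm_label_L1leaf erx xP) => -> Bx); try (case: (tnm_label_L1leaf ery yP) => -> By);
  try (case: (tnm_label_L2 Hx) => -> Bx); try (case: (tnm_label_L2 Hy) => -> By); try lia.
- move=> E; have E' : index_in Par2 x = index_in Par2 y by lia.
  exact: (index_in_inj xP yP E').
- move=> E; have E' : index_in L1leaf x = index_in L1leaf y by lia.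
  by apply: (index_in_inj (A := L1leaf)) E'; rewrite /L1leaf /L1 !inE ?xP ?yP ?erx ?ery.
- move=> E; have E' : index_in Par2 (parent2 x) = index_in Par2 (parent2 y) by lia.
  have := index_in_inj (parent2_Par2 Hx) (parent2_Par2 Hy) E'.
  by apply: parent2_inj; rewrite /L2 inE ?Hx ?Hy.
Qed.

Lemma tnm_label_adj x y : tnm_reln #|T| (domnum e) (tnm_label x) (tnm_label y) = e x y.
Proof.
have Hk := card_L2_le; have Hn := card_levels; have Hm := domnum_eq.
have LP u v : e r u -> u \notin Par2 -> lev v = 2%N -> ~~ e u v.
  move=> eru uP Hv; apply/negP => euv.
  by move: uP; rewrite (parent2_uniq Hv (etrans (esy v u) euv)) parent2_Par2.
have PL u v : u \in Par2 -> lev v = 2%N -> e u v = (index_in Par2 u == index_in Par2 (parent2 v)).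
  move=> uP Hv; apply/idP/eqP => [euv|E].
    by rewrite -(parent2_uniq Hv (etrans (esy v u) euv)).
  by rewrite (index_in_inj uP (parent2_Par2 Hv) E) esy (parent2_spec Hv).1.
case: (central_cases x) => [->|xP|[erx xP]|Hx];
  case: (central_cases y) => [->|yP|[ery yP]|Hy];
  rewrite ?tnm_label_root;
  try (case: (tnm_label_Par2 xP) => -> Bx); try (case: (tnm_label_Par2 yP) => -> By);
  try (case: (tnm_label_L1leaf erx xP) => -> Bx); try (case: (tnm_label_L1leaf ery yP) => -> By);
  try (case: (tnm_label_L2 Hx) => -> Bx); try (case: (tnm_label_L2 Hy) => -> By);
  rewrite /tnm_reln /tnm_adjn.
- rewrite eirr; lia.
- rewrite (Par2_root_nbr yP); lia.
- rewrite ery; lia.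
- rewrite (negbTE (lev2_not_root_nbr Hy)); lia.
- rewrite esy (Par2_root_nbr xP); lia.
- rewrite (negbTE (tree_nbrs_nonadj esy eirr tree (Par2_root_nbr xP) (Par2_root_nbr yP))); lia.
- rewrite (negbTE (tree_nbrs_nonadj esy eirr tree (Par2_root_nbr xP) ery)); lia.
- rewrite PL //; lia.
- rewrite esy erx; lia.
- rewrite (negbTE (tree_nbrs_nonadj esy eirr tree erx (Par2_root_nbr yP))); lia.
- rewrite (negbTE (tree_nbrs_nonadj esy eirr tree erx ery)); lia.
- rewrite (negbTE (LP _ _ erx xP Hy)); lia.
- rewrite esy (negbTE (lev2_not_root_nbr Hx)); lia.
- rewrite esy PL //; lia.
- rewrite esy (negbTE (LP _ _ ery yP Hx)); lia.
- rewrite (negbTE (lev2_nonadj Hx Hy)); lia.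
Qed.

Lemma central_iso : graph_iso e (tnm_rel #|T| (domnum e)).
Proof.
have Hk := card_L2_le; have Hn := card_levels.
apply: (graph_iso_ord (R := tnm_reln #|T| (domnum e)) (f := tnm_label)) => //.
- move=> x; case: (central_cases x) => [->|xP|[erx xP]|Hx]; rewrite ?tnm_label_root; try lia.
  + by case: (tnm_label_Par2 xP) => -> ?; lia.
  + by case: (tnm_label_L1leaf erx xP) => -> ?; lia.
  + by case: (tnm_label_L2 Hx) => -> ?; lia.
- exact: tnm_label_inj.
- exact: tnm_label_adj.
Qed.

End CentralExtremal.

End RadiusTwo.

Lemma graph_iso_cancel (T T' : finType) (e : rel T) (e' : rel T') : graph_iso e e' ->
  exists f : T -> T', exists g : T' -> T,
    [/\ cancel f g, cancel g f & forall x y, e' (f x) (f y) = e x y].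
Proof. by case=> f [[g fg gf] H]; exists f, g. Qed.

Section IsoTransfer.
Variables (T T' : finType) (e : rel T) (e' : rel T') (f : T -> T') (g : T' -> T).
Hypotheses (fg : cancel f g) (gf : cancel g f) (fe : forall x y, e' (f x) (f y) = e x y).

Lemma iso_inv_edge i j : e (g i) (g j) = e' i j.
Proof. by rewrite -fe !gf. Qed.

Lemma iso_inv_ball2 i0 : (forall j, [\/ j = i0, e' i0 j | exists2 k, e' i0 k & e' k j]) ->
  forall x, x \in ball e 2 (g i0).
Proof.
move=> Hj x; case: (Hj (f x)) => [E|E|[k E1 E2]].
- by rewrite -E fg ball_center.
- by apply: (subsetP (ball_subS _ _ _)); apply: mem_ball1; rewrite -(fg x) iso_inv_edge.
- apply: (mem_ball2 (w := g k)); first by rewrite iso_inv_edge.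
  by rewrite -(fg x) iso_inv_edge.
Qed.

Lemma iso_inv_deg i0 : deg e (g i0) = #|[set j | e' i0 j]|.
Proof.
rewrite /deg -(card_imset _ (can_inj gf)); apply: eq_card => y; rewrite !inE.
apply/idP/imsetP => [ey|[j]]; last by rewrite inE => ej ->; rewrite iso_inv_edge.
by exists (f y); rewrite ?fg // inE -iso_inv_edge fg.
Qed.

End IsoTransfer.

Lemma p2_x_subproof a b : (0 < a + b + 2)%N. Proof. by rewrite addn2. Qed.
Lemma p2_y_subproof a b : (1 < a + b + 2)%N. Proof. by rewrite addn2. Qed.
Definition p2_x a b : 'I_(a + b + 2) := Ordinal (p2_x_subproof a b).
Definition p2_y a b : 'I_(a + b + 2) := Ordinal (p2_y_subproof a b).

Lemma p2_ball2_x a b (j : 'I_(a + b + 2)) :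
  [\/ j = p2_x a b, p2_rel a b (p2_x a b) j |
      exists2 k, p2_rel a b (p2_x a b) k & p2_rel a b k j].
Proof.
have Hj := ltn_ord j.
case: (eqVneq (nat_of_ord j) 0%N) => [E|j0]; first by constructor 1; apply: val_inj.
case: (ltnP (nat_of_ord j) (a + 2)) => ja.
  by constructor 2; rewrite /p2_rel /symrel /p2_adj /=; lia.
by constructor 3; exists (p2_y a b); rewrite /p2_rel /symrel /p2_adj /=; lia.
Qed.

Lemma p2_ball2_y a b (j : 'I_(a + b + 2)) :
  [\/ j = p2_y a b, p2_rel a b (p2_y a b) j |
      exists2 k, p2_rel a b (p2_y a b) k & p2_rel a b k j].
Proof.
have Hj := ltn_ord j.
case: (eqVneq (nat_of_ord j) 1%N) => [E|j1]; first by constructor 1; apply: val_inj.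
case: (ltnP (nat_of_ord j) (a + 2)) => ja; last first.
  by constructor 2; rewrite /p2_rel /symrel /p2_adj /=; lia.
case: (eqVneq (nat_of_ord j) 0%N) => j0.
  by constructor 2; rewrite /p2_rel /symrel /p2_adj /=; lia.
by constructor 3; exists (p2_x a b); rewrite /p2_rel /symrel /p2_adj /=; lia.
Qed.

Lemma card_ord_interval n K : #|[set j : 'I_n | (1 <= j <= K)%N]| = minn n.-1 K.
Proof.
rewrite -sum1_card.
under eq_bigl => j do rewrite inE.
rewrite -(big_mkord (fun j => (0 < j <= K)%N) (fun _ => 1%N)) big_mkcond /=.
elim: n => [|n IH]; first by rewrite big_geq // min0n.
rewrite big_nat_recr //= IH; case: n {IH} => [|n] /=; first by rewrite !min0n.
case: ifP; lia.
Qed.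

Section TnmModel.
Variables (n m : nat).
Hypotheses (n_gt0 : (0 < n)%N) (m_gt0 : (0 < m)%N) (m_half : (2 * m <= n + 1)%N).

Definition tnm_center : 'I_n := Ordinal n_gt0.

Lemma tnm_ball2_center (j : 'I_n) :
  [\/ j = tnm_center, tnm_rel n m tnm_center j |
      exists2 k, tnm_rel n m tnm_center k & tnm_rel n m k j].
Proof.
have Hj := ltn_ord j.
case: (eqVneq (nat_of_ord j) 0%N) => [E|j0]; first by constructor 1; apply: val_inj.
case: (leqP (nat_of_ord j) (n - m)) => jm.
  by constructor 2; rewrite /tnm_rel /symrel /tnm_adj /=; lia.
have kp : (nat_of_ord j - (n - m) < n)%N by lia.
by constructor 3; exists (Ordinal kp); rewrite /tnm_rel /symrel /tnm_adj /=; lia.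
Qed.

Lemma tnm_deg_center : #|[set j | tnm_rel n m tnm_center j]| = (n - m)%N.
Proof.
have -> : [set j | tnm_rel n m tnm_center j] = [set j : 'I_n | (1 <= j <= n - m)%N].
  by apply/setP => j; rewrite !inE /tnm_rel /symrel /tnm_adj /=; lia.
by rewrite card_ord_interval; lia.
Qed.

End TnmModel.

Local Open Scope ring_scope.

Section UniversalVertex.
Variables (T : finType) (e : rel T).
Hypotheses (esy : symmetric e) (eirr : irreflexive e) (conn : connected_graph e).
Variable c : T.
Hypotheses (hc : forall x, x != c -> e c x) (hl : forall u v, u != c -> v != c -> ~~ e u v).
Hypothesis (HT : (3 <= #|T|)%N).

Lemma ecc_universal : ecc e c = 1%N.
Proof.
apply/eqP; rewrite eqn_leq; apply/andP; split.
  apply: (ecc_le conn) => y; apply/ball1P.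
  by case: (eqVneq y c) => [->|yc]; [left | right; apply: hc].
case: (exists_neq2 c c HT) => y /andP[yc _]; apply: (ecc_gt conn (y := y)).
by rewrite in_ball0.
Qed.

Lemma ecc_non_universal x : x != c -> ecc e x = 2%N.
Proof.
move=> xc; apply/eqP; rewrite eqn_leq; apply/andP; split.
  apply: (ecc_le conn) => y; case: (eqVneq y c) => [->|yc].
    by apply: (subsetP (ball_subS _ _ _)); apply: mem_ball1; rewrite esy hc.
  case: (eqVneq y x) => [->|yx]; first exact: ball_center.
  by apply: (mem_ball2 (w := c)); [rewrite esy|]; apply: hc.
case: (exists_neq2 x c HT) => y /andP[yx yc]; apply: (ecc_gt conn (y := y)).
by apply/ball1P => -[/eqP|]; [rewrite (negbTE yx) | apply/negP; apply: hl].
Qed.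

Lemma xi_ee_universal : xi_ee e = ((3 * #|T|)%:R - 3) / 2.
Proof.
have degc : deg e c = #|T|.-1.
  rewrite /deg -(cardsC1 c); apply: eq_card => y; rewrite !inE.
  apply/idP/idP => [ecy|yc]; last by apply: hc.
  by apply/eqP => E; rewrite E eirr in ecy.
have degx x : x != c -> deg e x = 1%N.
  move=> xc; rewrite /deg -(cards1 c); apply: eq_card => y; rewrite !inE.
  apply/idP/eqP => [exy|->]; last by rewrite esy hc.
  by apply/eqP; apply: contraLR exy => yc; apply: hl.
rewrite /xi_ee (bigD1 c) //= ecc_universal degc.
rewrite (eq_bigr (fun _ => 2^-1)); last by move=> x xc; rewrite degx // ecc_non_universal.
rewrite sumr_const cardC1.
case: #|T| HT => [|m] // _ /=.
rewrite -mulr_natr natrM mulr_natr -[m.+1]addn1 natrD.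
by field.
Qed.

End UniversalVertex.

Lemma xi_ee_ecc_ge3 (T : finType) (e : rel T) (r : T) : symmetric e -> irreflexive e ->
  is_tree e -> (forall x, (3 <= ecc e x)%N) -> xi_ee e <= (2 * (#|T|%:R - 1)) / 3.
Proof.
move=> esy eirr tree H3.
apply: (@le_trans _ _ (\sum_x (deg e x)%:R * (fun _ => 1) x / 3)).
  rewrite /xi_ee; apply: ler_sum => x _; rewrite mulr1; apply: ler_wpM2l => //.
  by rewrite lef_pV2 ?posrE ?ltr0n ?ler_nat //; apply: leq_trans (H3 x).
rewrite -mulr_suml (sum_deg_parent esy eirr tree (r := r) (h := fun _ => 1)) //.
rewrite sumr_const cardC1.
have : (0 < #|T|)%N by apply/card_gt0P; exists r.
by case: #|T| => // m _ /=; rewrite -mulr_natr -[m.+1]addn1 natrD; lra.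
Qed.

Section NoUniversalVertex.
Variables (T : finType) (e : rel T).
Hypotheses (esy : symmetric e) (eirr : irreflexive e) (tree : is_tree e).
Hypothesis (HT : (3 <= #|T|)%N).
Hypothesis (no_univ : forall c, exists2 x, x != c & ~~ e c x).
Let conn : connected_graph e := tree.1.

Lemma bicentral_or_central r : (forall x, x \in ball e 2 r) ->
  (exists2 y0, e r y0 & forall x, x \in ball e 2 y0) \/
  (forall y, e r y -> exists x, x \notin ball e 2 y).
Proof.
move=> hr; case: (boolP [exists y, e r y && [forall x, x \in ball e 2 y]]).
  by case/existsP => y0 /andP[ery0 /forallP hy0]; left; exists y0.
rewrite negb_exists => /forallP hB; right => y ery.
by move: (hB y); rewrite ery /= negb_forall => /existsP[x Hx]; exists x.
Qed.

Lemma xi_ee_cases :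
  [\/ xi_ee e <= 2 * (#|T|%:R - 1) / 3,
      [/\ xi_ee e = ((5 * #|T|)%:R - 4) / 6, (domnum e <= 2)%N &
          exists a b, (a + b + 2)%N = #|T| /\ graph_iso e (p2_rel a b)]
    | exists d : nat, [/\ xi_ee e = (7 * (#|T|%:R - 1) + 3 * d%:R) / 12, (d <= #|T| - 2)%N,
        (d + domnum e <= #|T|)%N &
        ((d + domnum e)%N = #|T| -> graph_iso e (tnm_rel #|T| (domnum e)))]].
Proof.
have /card_gt0P[x0 _] : (0 < #|T|)%N by lia.
case: (@arg_minnP T x0 predT (ecc e)) => // r _ r_min.
case: (leqP (ecc e r) 2) => H; last first.
  by constructor 1; apply: (xi_ee_ecc_ge3 r esy eirr tree) => x; apply: leq_trans H (r_min x isT).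
have hr : forall x, x \in ball e 2 r by move: H; rewrite (ecc_leq conn) => /forallP.
case: (bicentral_or_central hr) => [[y0 ery0 hy0]|hB].
  constructor 2; split.
  - exact: (xi_ee_bicentral esy eirr tree HT no_univ hr ery0 hy0).
  - exact: (domnum_bicentral esy eirr tree hr ery0 hy0).
  - case: (bicentral_iso esy eirr tree HT hr ery0 hy0) => H1 H2.
    by exists #|L1r e r y0|, #|L2 e r|.
constructor 3; exists #|L1 e r|; split.
- exact: (xi_ee_central esy eirr tree no_univ hr hB).
- exact: (card_L1_le eirr tree HT no_univ hr).
- exact: (card_L1_domnum_le esy eirr tree HT hr).
- exact: (central_iso esy eirr tree HT hr).
Qed.

Lemma xi_ee_iso_P2 a b : (a + b + 2)%N = #|T| -> graph_iso e (p2_rel a b) ->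
  xi_ee e = ((5 * #|T|)%:R - 4) / 6.
Proof.
move=> Hab /graph_iso_cancel [f [g [fg gf fe]]].
have hr := iso_inv_ball2 fg gf fe (@p2_ball2_x a b).
have hy := iso_inv_ball2 fg gf fe (@p2_ball2_y a b).
have ery : e (g (p2_x a b)) (g (p2_y a b)) by rewrite (iso_inv_edge gf fe).
exact: (xi_ee_bicentral esy eirr tree HT no_univ hr ery hy).
Qed.

Lemma xi_ee_iso_Tnm : (3 <= domnum e)%N -> graph_iso e (tnm_rel #|T| (domnum e)) ->
  xi_ee e = ((10 * #|T|)%:R - (3 * domnum e)%:R - 7) / 12.
Proof.
move=> H3 /graph_iso_cancel [f [g [fg gf fe]]].
have n_gt0 : (0 < #|T|)%N by lia.
have m_gt0 : (0 < domnum e)%N by lia.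
set c := g (tnm_center n_gt0).
have m_half : (2 * domnum e <= #|T| + 1)%N by have := domnum_half esy eirr tree c; lia.
have hr := iso_inv_ball2 fg gf fe (tnm_ball2_center n_gt0 m_gt0 m_half).
have Hd : deg e c = (#|T| - domnum e)%N.
  by rewrite (iso_inv_deg fg gf fe) (tnm_deg_center n_gt0 m_gt0 m_half).
case: (bicentral_or_central hr) => [[y0 ery0 hy0]|hB].
  by have := domnum_bicentral esy eirr tree hr ery0 hy0; lia.
rewrite (xi_ee_central esy eirr tree no_univ hr hB).
have -> : #|L1 e c| = (#|T| - domnum e)%N by rewrite -Hd.
have Hle : (domnum e <= #|T|)%N by lia.
by rewrite natrB // !natrM; lra.
Qed.

End NoUniversalVertex.

Lemma domnum1_universal (T : finType) (e : rel T) : symmetric e -> domnum e = 1%N ->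
  exists c, forall x, x != c -> e c x.
Proof.
move=> esy H1; case: (domnum_attained e) => D HD; rewrite H1 => /eqP/cards1P [c Dc].
rewrite Dc in HD; exists c => x xc.
by case: (dominating1 HD x) => [E|]; [rewrite E eqxx in xc | rewrite esy].
Qed.

Lemma xi_ee_star n : (3 <= n)%N -> xi_ee (star_rel n) = ((3 * n)%:R - 3) / 2.
Proof.
move=> Hn; have n_gt0 : (0 < n)%N by lia.
pose c : 'I_n := Ordinal n_gt0.
have sS : symmetric (star_rel n) by move=> i j; rewrite /star_rel addbC.
have iS : irreflexive (star_rel n) by move=> i; rewrite /star_rel addbb.
have neq_c (x : 'I_n) : x != c -> (val x == 0%N) = false.
  by move=> xc; apply/eqP => E; move/eqP: xc; apply; apply: val_inj.
have hc x : x != c -> star_rel n c x by move=> xc; rewrite /star_rel /= neq_c.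
have hl u v : u != c -> v != c -> ~~ star_rel n u v by move=> uc vc; rewrite /star_rel !neq_c.
have connS : connected_graph (star_rel n).
  have to_c x : connect (star_rel n) x c.
    by case: (eqVneq x c) => [->|xc]; [exact: connect0 | apply: connect1; rewrite sS hc].
  by move=> x y; apply: connect_trans (to_c x) _; rewrite (sym_connect_sym sS).
by rewrite (xi_ee_universal sS iS connS hc hl) ?card_ord.
Qed.

Section Bounds.
Variables (T : finType) (e : rel T).
Hypotheses (esy : symmetric e) (eirr : irreflexive e) (tree : is_tree e).
Hypothesis (HT : (3 <= #|T|)%N).

Lemma xi_ee_domnum1 : domnum e = 1%N -> xi_ee e = ((3 * #|T|)%:R - 3) / 2.
Proof.
case/(domnum1_universal esy) => c hc.
have hl u v : u != c -> v != c -> ~~ e u v.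
  by move=> uc vc; apply: (tree_nbrs_nonadj esy eirr tree (hc u uc) (hc v vc)).
exact: (xi_ee_universal esy eirr tree.1 hc hl HT).
Qed.

Let no_univ : domnum e != 1%N -> forall c, exists2 x, x != c & ~~ e c x.
Proof. by move=> H1; apply: exists_non_nbr esy H1 _; lia. Qed.

Lemma xi_ee_domnum2 : domnum e = 2%N ->
  xi_ee e <= ((5 * #|T|)%:R - 4) / 6 /\
  (xi_ee e = ((5 * #|T|)%:R - 4) / 6 <->
     exists a b : nat, (a + b + 2 = #|T|)%N /\ graph_iso e (p2_rel a b)).
Proof.
move=> H2; have nu := no_univ (ltac:(by rewrite H2)).
have HT' : (3 : rat) <= #|T|%:R by rewrite ler_nat.
have E5 : ((5 * #|T|)%:R : rat) = 5 * #|T|%:R by rewrite natrM.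
have iso_eq : (exists a b, (a + b + 2 = #|T|)%N /\ graph_iso e (p2_rel a b)) ->
    xi_ee e = ((5 * #|T|)%:R - 4) / 6.
  by case=> a [b [Hab Hi]]; apply: (xi_ee_iso_P2 esy eirr tree HT nu Hab Hi).
case: (xi_ee_cases esy eirr tree HT nu) => [Hle|[Hxi _ Hiso]|[d [Hxi Hd _ _]]].
- split; first by rewrite E5; lra.
  split=> // Heq; suff : (0 : rat) < 0 by rewrite ltxx.
  by rewrite E5 in Heq; lra.
- by split; [rewrite Hxi | split].
- have : ((d + 2)%:R : rat) <= #|T|%:R by rewrite ler_nat; lia.
  rewrite natrD => Hd'.
  split; first by rewrite E5 Hxi; lra.
  split=> // Heq; suff : (0 : rat) < 0 by rewrite ltxx.
  by rewrite E5 Hxi in Heq; lra.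
Qed.

Lemma xi_ee_domnum_ge3 : (3 <= domnum e)%N ->
  xi_ee e <= ((10 * #|T|)%:R - (3 * domnum e)%:R - 7) / 12 /\
  (xi_ee e = ((10 * #|T|)%:R - (3 * domnum e)%:R - 7) / 12 <->
     graph_iso e (tnm_rel #|T| (domnum e))).
Proof.
move=> H3; have nu := no_univ (ltac:(apply/eqP; lia)).
have /card_gt0P[x0 _] : (0 < #|T|)%N by lia.
have : ((2 * domnum e)%:R : rat) <= #|T|%:R.
  by rewrite ler_nat; apply: (domnum_half esy eirr tree x0); lia.
rewrite natrM => Hhalf.
have HG : (3 : rat) <= (domnum e)%:R by rewrite ler_nat.
have iso_eq := xi_ee_iso_Tnm esy eirr tree HT nu H3.
rewrite !natrM in iso_eq *.
case: (xi_ee_cases esy eirr tree HT nu) => [Hle|[_ Hdom _]|[d [Hxi _ Hb Heq]]].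
- split; first lra.
  split=> // E; suff : (0 : rat) < 0 by rewrite ltxx.
  lra.
- by exfalso; lia.
- have : ((d + domnum e)%:R : rat) <= #|T|%:R by rewrite ler_nat.
  rewrite natrD => Hb'.
  split; first by rewrite Hxi; lra.
  split=> // E; apply: Heq; apply/eqP; rewrite -(eqr_nat rat) natrD; apply/eqP.
  by rewrite Hxi in E; lra.
Qed.

End Bounds.

Unset Implicit Arguments.
Set Strict Implicit.

Theorem theorem4p5 (T : finType) (e : rel T) (n : nat) :
  symmetric e -> irreflexive e -> is_tree e -> #|T| = n -> (3 <= n)%N ->
  [/\ domnum e = 1%N ->
        xi_ee e = xi_ee (star_rel n) /\
        xi_ee (star_rel n) = ((3 * n)%:R - 3) / 2,
      domnum e = 2%N ->
        xi_ee e <= ((5 * n)%:R - 4) / 6 /\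
        (xi_ee e = ((5 * n)%:R - 4) / 6 <->
           exists a b : nat, (a + b + 2 = n)%N /\ graph_iso e (p2_rel a b))
    & (3 <= domnum e)%N ->
        xi_ee e <= ((10 * n)%:R - (3 * domnum e)%:R - 7) / 12 /\
        (xi_ee e = ((10 * n)%:R - (3 * domnum e)%:R - 7) / 12 <->
           graph_iso e (tnm_rel n (domnum e)))].
Proof.
move=> esy eirr tree <- HT; split.
- by move=> H1; rewrite xi_ee_star // xi_ee_domnum1.
- exact: xi_ee_domnum2.
- exact: xi_ee_domnum_ge3.
Qed.
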